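(* Let $a>0$ with $2a/\sqrt{3}<\pi/2$, let $\Delta$, $h$ and $D_p$ be as below, fix $p\in\Delta$, and let $P:\mathbb{R}^3\to D_p$ be the Euclidean nearest-point projection onto $D_p$. For every piecewise smooth curve $\gamma$ in $\mathbb{R}^3$, setting $\gamma'=P\circ\gamma$, one has $l_h(\gamma)\ge l_h(\gamma')$.
   Context: $\Delta\subset\mathbb{R}^2$ is the hexagonal lattice generated by $(2a,0)$ and $(a,a\sqrt3)$; for $p\in\Delta$, $V_p$ is its closed Voronoi cell (a regular hexagon centered at $p$ with inradius $a$), and $D_p=V_p\times\mathbb{R}\subset\mathbb{R}^3$ is the corresponding vertical hexagonal prism (a convex set, so the nearest-point projection is well defined). $h$ is the continuous Riemannian metric $dx^2+dy^2+\cos^2\!\big(\mathrm{dist}((x,y),\Delta)\big)\,dz^2$ on $\mathbb{R}^3$, $\mathrm{dist}$ the Euclidean distance in $\mathbb{R}^2$, and $l_h(\gamma)=\int (h(\gamma',\gamma'))^{1/2}dt$ is the $h$-length. $(\mathbb{R}^3,h)$ is the universal Riemannian cover of the quotient torus $(\mathbb{R}^3,h)/(2\Delta\times2\pi\mathbb{Z})$. *)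

From HB Require Import structures.
From mathcomp Require Import all_boot all_order all_algebra.
From mathcomp Require Import all_classical all_reals all_analysis.
Set Implicit Arguments. Unset Strict Implicit. Unset Printing Implicit Defensive.
Import Order.TTheory GRing.Theory Num.Theory.
Import numFieldNormedType.Exports.
Local Open Scope classical_set_scope.
Local Open Scope ring_scope.

Section Defs.
Variable R : realType.

Definition pt2 := (R * R)%type.
Definition pt3 := (R * R * R)%type.
Definition px (q : pt3) : R := q.1.1.
Definition py (q : pt3) : R := q.1.2.
Definition pz (q : pt3) : R := q.2.
Definition hor (q : pt3) : pt2 := q.1.

Definition sqd2 (u v : pt2) : R := (u.1 - v.1) ^+ 2 + (u.2 - v.2) ^+ 2.
Definition sqd3 (u v : pt3) : R :=
  (px u - px v) ^+ 2 + (py u - py v) ^+ 2 + (pz u - pz v) ^+ 2.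

Definition hexlat (a : R) : set pt2 :=
  [set q | exists m n : int,
     q = (m%:~R * (2 * a) + n%:~R * a, n%:~R * (a * Num.sqrt 3))].

Definition dist_lat (a : R) (q : pt2) : R :=
  inf [set d | exists l, hexlat a l /\ d = Num.sqrt (sqd2 q l)].

Definition voronoi (a : R) (p : pt2) : set pt2 :=
  [set q | forall l, hexlat a l -> sqd2 q p <= sqd2 q l].

Definition prism (a : R) (p : pt2) : set pt3 := [set q | voronoi a p (hor q)].

Definition hmetric (a : R) (q v : pt3) : R :=
  px v ^+ 2 + py v ^+ 2 + (cos (dist_lat a (hor q))) ^+ 2 * pz v ^+ 2.

Definition cderivable (c : R -> pt3) (t : R) : Prop :=
  [/\ derivable (px \o c) t 1, derivable (py \o c) t 1 & derivable (pz \o c) t 1].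
Definition cderive (c : R -> pt3) (t : R) : pt3 :=
  ('D_1 (px \o c) t, 'D_1 (py \o c) t, 'D_1 (pz \o c) t).

Definition C1curve (g : R -> pt3) : Prop :=
  (forall t, cderivable g t) /\
  [/\ continuous (fun t => 'D_1 (px \o g) t),
      continuous (fun t => 'D_1 (py \o g) t) &
      continuous (fun t => 'D_1 (pz \o g) t)].

Definition piecewise_smooth (c : R -> pt3) (t0 t1 : R) : Prop :=
  exists (n : nat) (s : nat -> R),
    [/\ s 0%N = t0, s n = t1,
        (forall i, (i < n)%N -> s i < s i.+1) &
        (forall i, (i < n)%N -> exists g, C1curve g /\
            (forall t, s i <= t <= s i.+1 -> c t = g t))].

(* speed of a curve w.r.t. h: sqrt(h(c',c')) where c is differentiable,
   0 elsewhere (a null set for the curves considered) *)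
Definition hspeed (a : R) (c : R -> pt3) (t : R) : R :=
  if `[< cderivable c t >] then Num.sqrt (hmetric a (c t) (cderive c t)) else 0.

Definition hlength (a : R) (c : R -> pt3) (t0 t1 : R) : \bar R :=
  (\int[@lebesgue_measure R]_(t in `[t0, t1]) (hspeed a c t)%:E)%E.

Definition nearest_proj (D : set pt3) (P : pt3 -> pt3) : Prop :=
  forall x, D (P x) /\ (forall y, D y -> sqd3 x (P x) <= sqd3 x y).

End Defs.

From HB Require Import structures.
From mathcomp Require Import all_boot all_order all_algebra.
From mathcomp Require Import all_classical all_reals all_analysis.
From mathcomp Require Import ring lra zify measurable_realfun.
Import Order.TTheory GRing.Theory Num.Theory.
Import numFieldNormedType.Exports.
Local Open Scope classical_set_scope.
Local Open Scope ring_scope.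

(* The nearest-point projection onto the prism D_p = V_p x R keeps the vertical
   coordinate and acts horizontally as the nearest-point projection onto the
   convex hexagon V_p, which is 1-Lipschitz; so it shortens the horizontal part
   of every velocity.  It remains to see that the weight cos^2 (dist (., Delta))
   of the vertical part does not decrease.  If w is the projection of X onto V_p,
   then X - w lies in the normal cone of V_p at w; rounding in lattice
   coordinates inside that cone produces a lattice point within |w - p| of X, so
   dist (X, Delta) <= dist (w, Delta) = |w - p|, and |w - p| is at most the
   circumradius 2a/sqrt 3 < pi/2, where cos is nonnegative and decreasing.  The
   speeds then compare off the finitely many break points of the curve. *)

Section integral_offnull.
Import HBNNSimple.

(* No measurability of D, f or g is needed: the left integral is a supremum of
   integrals of simple functions below f, and cutting such a function off on N
   changes nothing. *)
Lemma ge0_le_integral_offnull {d} {T : measurableType d} {R : realType}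
    (mu : {measure set T -> \bar R}) (D N : set T) (f g : T -> R) :
  measurable N -> mu N = 0%E ->
  (forall x, D x -> 0 <= f x) -> (forall x, D x -> 0 <= g x) ->
  (forall x, D x -> ~ N x -> f x <= g x) ->
  (\int[mu]_(x in D) (f x)%:E <= \int[mu]_(x in D) (g x)%:E)%E.
Proof.
move=> mN N0 f0 g0 fg.
rewrite !ge0_integralE; last 2 first.
- by move=> x Dx; rewrite lee_fin g0.
- by move=> x Dx; rewrite lee_fin f0.
apply: ge_ereal_sup => _ [h /= hf] <-.
rewrite -integralT_nnsfun (ge0_negligible_integral _ _ _ _ N0) //; last 2 first.
- by apply/measurable_EFinP; exact: measurable_funTS.
- by move=> x _; rewrite lee_fin.
have mTN : measurable (setT `\` N) by exact: measurableD.
rewrite integral_nnsfun // (mrestrict h mTN).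
apply: ereal_sup_ubound; exists (proj_nnsfun h mTN) => // x /=.
rewrite mindicE /patch; have := hf x; rewrite /patch.
case: ifPn => [/set_mem Dx|_] hx.
  case: (boolP (x \in _)) => [/set_mem [_ /= Nx]|_]; last by rewrite mulr0 lee_fin g0.
  by rewrite mulr1 (le_trans hx) // lee_fin fg.
have h0 : 0 <= h x by [].
move: hx; rewrite lee_fin => hx.
have -> : h x = 0 by apply/le_anti; rewrite hx h0.
by rewrite mul0r.
Qed.

End integral_offnull.

Lemma derive_sqnorm_le {R : realType} {f1 f2 g1 g2 : R -> R} {t : R} :
  derivable f1 t 1 -> derivable f2 t 1 -> derivable g1 t 1 -> derivable g2 t 1 ->
  (forall u, (f1 u - f1 t) ^+ 2 + (f2 u - f2 t) ^+ 2 <=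
             (g1 u - g1 t) ^+ 2 + (g2 u - g2 t) ^+ 2) ->
  'D_1 f1 t ^+ 2 + 'D_1 f2 t ^+ 2 <= 'D_1 g1 t ^+ 2 + 'D_1 g2 t ^+ 2.
Proof.
move=> df1 df2 dg1 dg2 fg.
set q := fun (f : R -> R) (h : R) => h^-1 *: ((f \o shift t) (h *: 1) - f t).
have cf1 : q f1 @ 0^' --> 'D_1 f1 t := df1.
have cf2 : q f2 @ 0^' --> 'D_1 f2 t := df2.
have cg1 : q g1 @ 0^' --> 'D_1 g1 t := dg1.
have cg2 : q g2 @ 0^' --> 'D_1 g2 t := dg2.
rewrite -subr_ge0 !expr2.
apply: (@cvgr_to_ge _ (0^' : set_system R) _ _
  (fun h => (q g1 h * q g1 h + q g2 h * q g2 h) - (q f1 h * q f1 h + q f2 h * q f2 h))).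
  by apply: cvgB; apply: cvgD; apply: cvgM.
near=> h.
rewrite subr_ge0 /q /= !scaler1 -!mulrA.
have := fg (h + t); rewrite !expr2 /GRing.scale /= => fgh.
have k2 : 0 <= h^-1 * h^-1 by rewrite -expr2 sqr_ge0.
nra.
Unshelve. all: by end_near. Qed.

(* In the lattice basis (2a, 0), (a, a sqrt 3) the Euclidean squared norm is
   4 a^2 eisQ and the scalar product is 2 a^2 eisB. *)
Definition eisQ {R : pzRingType} (x1 x2 : R) : R := x1 ^+ 2 + x1 * x2 + x2 ^+ 2.
Definition eisB {R : pzRingType} (x1 x2 z1 z2 : R) : R :=
  2 * x1 * z1 + x1 * z2 + x2 * z1 + 2 * x2 * z2.

Lemma intr_eisQ {R : pzRingType} (m n : int) :
  (eisQ m n)%:~R = eisQ m%:~R n%:~R :> R.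
Proof. by rewrite /eisQ !expr2 !intrD !intrM. Qed.

Lemma intr_eisB {R : pzRingType} (m1 m2 n1 n2 : int) :
  (eisB m1 m2 n1 n2)%:~R = eisB m1%:~R m2%:~R n1%:~R n2%:~R :> R.
Proof. by rewrite /eisB !intrD !intrM. Qed.

Lemma int_eisB_le (x1 x2 y1 y2 : int) :
  eisQ x1 x2 = 3 -> eisB x1 x2 y1 y2 <= 3 * eisQ y1 y2.
Proof.
rewrite /eisB /eisQ !expr2 => Qx.
set b := 2 * x1 * y1 + x1 * y2 + x2 * y1 + 2 * x2 * y2.
set q := y1 * y1 + y1 * y2 + y2 * y2.
have q_ge0 : 0 <= q by rewrite /q; nia.
have CS : b * b <= 12 * q.
  have : b * b + 3 * (x1 * y2 - x2 * y1) ^+ 2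
         = 4 * (x1 * x1 + x1 * x2 + x2 * x2) * q by rewrite /b /q; ring.
  by rewrite Qx; have := sqr_ge0 (x1 * y2 - x2 * y1); lia.
(* An integer b with b^2 <= 12 q cannot exceed 3 q,
   as (3 q + 1)^2 - 12 q = (3 q - 1)^2 > 0. *)
rewrite leNgt; apply/negP => lt_b.
have : (3 * q + 1) * (3 * q + 1) <= b * b by nia.
have : 1 <= (3 * q - 1) * (3 * q - 1) by case: (lerP q 0) => ?; nia.
nia.
Qed.

Section eisenstein.
Context {R : realType}.
Implicit Types (c f w x z : R) (m n : int).

Definition eis_voronoi w1 w2 :=
  forall m n, eisQ w1 w2 <= eisQ (w1 - m%:~R) (w2 - n%:~R).

Lemma eisQB x1 x2 z1 z2 :
  eisQ (x1 - z1) (x2 - z2) = eisQ x1 x2 - eisB x1 x2 z1 z2 + eisQ z1 z2.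
Proof. by rewrite /eisQ /eisB; ring. Qed.

(* The inequality says that (f1 - d1 + 1/3, f2 - d2 + 1/3) lies within the
   circumradius 1/sqrt 3 of the origin. *)
Lemma round_frac f1 f2 : 0 <= f1 < 1 -> 0 <= f2 < 1 ->
  exists d1 d2 : bool, [/\ d1 -> 0 < f1, d2 -> 0 < f2 &
    (f1 - d1%:R) + (f2 - d2%:R) + eisQ (f1 - d1%:R) (f2 - d2%:R) <= 0].
Proof.
wlog f12 : f1 f2 / f1 <= f2 => [hwlog hf1 hf2|/andP[f10 f11] /andP[f20 f21]].
  have [f12|/ltW f21] := lerP f1 f2; first exact: hwlog.
  have [d2 [d1 [h2 h1 h]]] := hwlog f2 f1 f21 hf2 hf1.
  by exists d1, d2; split => //; move: h; rewrite /eisQ; lra.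
rewrite /eisQ; have [up|low] := lerP 1 (2 * f1 + f2).
  by exists true, true; split => [||/=]; [lra|lra|nra].
exists false, (0 < f2); split => //=; case: ltrP => f2p /=; nra.
Qed.

Lemma round_in_cone c1 c2 (A B : R) :
  0 <= c1 -> 0 <= c2 -> A <= 1 -> B <= 1 -> c1 + c2 <= c1 * A + c2 * B ->
  exists K1 K2 : int,
    (c1 - K1%:~R) * A + (c2 - K2%:~R) * B + eisQ (c1 - K1%:~R) (c2 - K2%:~R) <= 0.
Proof.
move=> c10 c20 A1 B1 cAB.
have A_eq1 : 0 < c1 -> A = 1 by move=> c1p; apply/le_anti; rewrite A1 /=; nra.
have B_eq1 : 0 < c2 -> B = 1 by move=> c2p; apply/le_anti; rewrite B1 /=; nra.
have floor_frac c : 0 <= c ->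
    [&& 0 <= c - (Num.floor c)%:~R < 1 & c - (Num.floor c)%:~R <= c].
  move=> c0; have fl := Num.Theory.floor_le c.
  have flD := Num.Theory.floorD1_gt c; rewrite intrD in flD.
  have fl0 : 0 <= (Num.floor c)%:~R :> R by rewrite ler0z Num.Theory.floor_ge_int.
  by rewrite -andbA; apply/and3P; split; lra.
have /andP[hf1 f1c] := floor_frac c1 c10; have /andP[hf2 f2c] := floor_frac c2 c20.
have [d1 [d2 [d1p d2p e]]] := round_frac _ _ hf1 hf2.
move: hf1 hf2 => /andP[f10 f11] /andP[f20 f21].
exists (Num.floor c1 + d1), (Num.floor c2 + d2).
rewrite !intrD -!pmulrn !opprD !addrA.
set e1 := _ - _ - _; set e2 := c2 - _ - _.
have e1A : e1 * A <= e1.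
  case: d1 d1p @e1 e => [/(_ isT) f1p|_] e1 _; first by rewrite A_eq1 ?mulr1 //; lra.
  by rewrite /e1 subr0 ler_piMr //; lra.
have e2B : e2 * B <= e2.
  case: d2 d2p @e2 e => [/(_ isT) f2p|_] e2 _; first by rewrite B_eq1 ?mulr1 //; lra.
  by rewrite /e2 subr0 ler_piMr //; lra.
by move: e e1A e2B; rewrite /eisQ /e1 /e2; lra.
Qed.

(* ((i1 + i2) / 3, (j1 + j2) / 3) is the vertex of the cell between the unit
   vectors (i1, j1) and (i2, j2). *)
Lemma near_lattice_in_cone w1 w2 x1 x2 i1 j1 i2 j2 c1 c2 :
  eisQ i1 j1 = 1 -> eisQ i2 j2 = 1 -> eisB i1 j1 i2 j2 = 1 ->
  0 <= c1 -> 0 <= c2 ->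
  x1 = w1 + (c1 * i1 + c2 * i2) -> x2 = w2 + (c1 * j1 + c2 * j2) ->
  eisB w1 w2 i1 j1 <= 1 -> eisB w1 w2 i2 j2 <= 1 ->
  eisB (x1 - w1) (x2 - w2) ((i1 + i2) / 3 - w1) ((j1 + j2) / 3 - w2) <= 0 ->
  exists K1 K2 : int,
    eisQ (x1 - (K1%:~R * i1 + K2%:~R * i2)) (x2 - (K1%:~R * j1 + K2%:~R * j2))
    <= eisQ w1 w2.
Proof.
move=> Q1 Q2 B12 c10 c20 -> -> A1 B1 normal.
have [|K1 [K2 HK]] := round_in_cone _ _ _ _ c10 c20 A1 B1.
  have E : eisB (w1 + (c1 * i1 + c2 * i2) - w1) (w2 + (c1 * j1 + c2 * j2) - w2)
      ((i1 + i2) / 3 - w1) ((j1 + j2) / 3 - w2) =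
    c1 * ((2 * eisQ i1 j1 + eisB i1 j1 i2 j2) / 3) +
    c2 * ((eisB i1 j1 i2 j2 + 2 * eisQ i2 j2) / 3) -
    (c1 * eisB w1 w2 i1 j1 + c2 * eisB w1 w2 i2 j2).
    by rewrite /eisB /eisQ; field.
  by move: normal; rewrite E Q1 Q2 B12; lra.
exists K1, K2.
set e1 := c1 - K1%:~R; set e2 := c2 - K2%:~R.
have -> : eisQ (w1 + (c1 * i1 + c2 * i2) - (K1%:~R * i1 + K2%:~R * i2))
    (w2 + (c1 * j1 + c2 * j2) - (K1%:~R * j1 + K2%:~R * j2)) =
  eisQ w1 w2 + e1 * eisB w1 w2 i1 j1 + e2 * eisB w1 w2 i2 j2 +
  e1 ^+ 2 * eisQ i1 j1 + e2 ^+ 2 * eisQ i2 j2 + e1 * e2 * eisB i1 j1 i2 j2.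
  by rewrite /e1 /e2 /eisQ /eisB; ring.
by move: HK; rewrite -/e1 -/e2 Q1 Q2 B12 !mulr1 /eisQ; lra.
Qed.

Lemma near_lattice_in_sector (i1 j1 i2 j2 : int) w1 w2 x1 x2 c1 c2 :
  eisQ i1 j1 = 1 -> eisQ i2 j2 = 1 -> eisB i1 j1 i2 j2 = 1 ->
  0 <= c1 -> 0 <= c2 ->
  x1 = w1 + (c1 * i1%:~R + c2 * i2%:~R) -> x2 = w2 + (c1 * j1%:~R + c2 * j2%:~R) ->
  eis_voronoi w1 w2 ->
  (forall z1 z2, eis_voronoi z1 z2 -> eisB (x1 - w1) (x2 - w2) (z1 - w1) (z2 - w2) <= 0) ->
  exists m n, eisQ (x1 - m%:~R) (x2 - n%:~R) <= eisQ w1 w2.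
Proof.
move=> Q1 Q2 B12 c10 c20 ex1 ex2 Vw normal.
have vertex m n : eisB (i1 + i2) (j1 + j2) m n <= 3 * eisQ m n.
  apply: int_eisB_le; have -> : eisQ (i1 + i2) (j1 + j2) =
      eisQ i1 j1 + eisB i1 j1 i2 j2 + eisQ i2 j2 by rewrite /eisQ /eisB; ring.
  by rewrite Q1 Q2 B12.
have [Q1r Q2r B12r] : [/\ eisQ i1%:~R j1%:~R = 1 :> R, eisQ i2%:~R j2%:~R = 1 :> R
    & eisB i1%:~R j1%:~R i2%:~R j2%:~R = 1 :> R].
  by rewrite -intr_eisQ -intr_eisQ -intr_eisB Q1 Q2 B12.
have A1 : eisB w1 w2 i1%:~R j1%:~R <= 1 by have := Vw i1 j1; rewrite eisQB Q1r; lra.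
have B1 : eisB w1 w2 i2%:~R j2%:~R <= 1 by have := Vw i2 j2; rewrite eisQB Q2r; lra.
have [|K1 [K2 HK]] :=
  near_lattice_in_cone _ _ _ _ _ _ _ _ _ _ Q1r Q2r B12r c10 c20 ex1 ex2 A1 B1.
  apply: normal => m n; rewrite eisQB.
  have := vertex m n; rewrite -(ler_int R) intrM intr_eisB intr_eisQ !intrD.
  by rewrite /eisB /eisQ; lra.
by exists (K1 * i1 + K2 * i2), (K1 * j1 + K2 * j2); rewrite !intrD !intrM.
Qed.

(* Split [x - w] along the six sectors spanned by adjacent unit lattice vectors. *)
Lemma eis_voronoi_normal_near_lattice w1 w2 x1 x2 :
  eis_voronoi w1 w2 ->
  (forall z1 z2, eis_voronoi z1 z2 -> eisB (x1 - w1) (x2 - w2) (z1 - w1) (z2 - w2) <= 0) ->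
  exists m n, eisQ (x1 - m%:~R) (x2 - n%:~R) <= eisQ w1 w2.
Proof.
move=> Vw normal.
have c0 : 0%:~R = 0 :> R by [].
have c1 : 1%:~R = 1 :> R by [].
have cm1 : (-1)%:~R = -1 :> R by rewrite intrN.
have [d1p|d1n] := lerP 0 (x1 - w1); have [d2p|d2n] := lerP 0 (x2 - w2).
- apply: (near_lattice_in_sector 1 0 0 1 _ _ _ _ (x1 - w1) (x2 - w2)) => //;
    rewrite ?c0 ?c1 ?cm1; lra.
- have [s|s] := lerP 0 (x1 - w1 + (x2 - w2)).
  + apply: (near_lattice_in_sector 1 (-1) 1 0 _ _ _ _ (w2 - x2) (x1 - w1 + (x2 - w2)))
      => //; rewrite ?c0 ?c1 ?cm1; lra.
  + apply: (near_lattice_in_sector 0 (-1) 1 (-1) _ _ _ _ (w1 - x1 - (x2 - w2)) (x1 - w1))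
      => //; rewrite ?c0 ?c1 ?cm1; lra.
- have [s|s] := lerP 0 (x1 - w1 + (x2 - w2)).
  + apply: (near_lattice_in_sector 0 1 (-1) 1 _ _ _ _ (x1 - w1 + (x2 - w2)) (w1 - x1))
      => //; rewrite ?c0 ?c1 ?cm1; lra.
  + apply: (near_lattice_in_sector (-1) 1 (-1) 0 _ _ _ _ (x2 - w2) (w1 - x1 - (x2 - w2)))
      => //; rewrite ?c0 ?c1 ?cm1; lra.
- apply: (near_lattice_in_sector (-1) 0 0 (-1) _ _ _ _ (w1 - x1) (w2 - x2)) => //;
    rewrite ?c0 ?c1 ?cm1; lra.
Qed.

(* Testing the six neighbours (1,0), (0,1), (1,-1) and their opposites confines
   the cell to |u|, |v|, |u - v| <= 1 in the coordinates u = 2 w1 + w2,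
   v = w1 + 2 w2, where 3 eisQ = u^2 - u v + v^2. *)
Lemma eis_voronoi_eisQ_le w1 w2 : eis_voronoi w1 w2 -> eisQ w1 w2 <= 1 / 3.
Proof.
move=> Vw.
have c0 : (0%:~R : R) = 0 by [].
have c1 : (1%:~R : R) = 1 by [].
have cm1 : ((-1 : int)%:~R : R) = -1 by rewrite intrN.
have := Vw 1 0; have := Vw (-1) 0; have := Vw 0 1; have := Vw 0 (-1);
have := Vw 1 (-1); have := Vw (-1) 1.
rewrite /eisQ ?c0 ?c1 ?cm1 => h1 h2 h3 h4 h5 h6.
have -> : w1 ^+ 2 + w1 * w2 + w2 ^+ 2 =
    ((2 * w1 + w2) ^+ 2 - (2 * w1 + w2) * (w1 + 2 * w2) + (w1 + 2 * w2) ^+ 2) / 3.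
  by field.
rewrite ler_pdivrMr // mul1r.
set u := 2 * w1 + w2; set v := w1 + 2 * w2.
have : [/\ -1 <= u <= 1, -1 <= v <= 1 & -1 <= u - v <= 1].
  by rewrite /u /v; split; apply/andP; split; nra.
by case=> /andP[? ?] /andP[? ?] /andP[? ?]; have [u0|u0] := lerP 0 u;
  have [v0|v0] := lerP 0 v; nra.
Qed.
End eisenstein.

Section nearest_point.
Context {R : realType}.
Implicit Types (S : set (pt2 R)) (u v w z X : pt2 R).

Definition dot_from (w X z : pt2 R) : R :=
  (X.1 - w.1) * (z.1 - w.1) + (X.2 - w.2) * (z.2 - w.2).

Definition convex2 S := forall u v (t : R), 0 <= t <= 1 -> S u -> S v ->
  S ((1 - t) * u.1 + t * v.1, (1 - t) * u.2 + t * v.2).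

Lemma nearest_normal S X w : convex2 S -> S w ->
  (forall u, S u -> sqd2 X w <= sqd2 X u) -> forall z, S z -> dot_from w X z <= 0.
Proof.
move=> cvxS Sw wmin z Sz; rewrite leNgt; apply/negP => c0.
set c := dot_from w X z in c0.
set D := (z.1 - w.1) ^+ 2 + (z.2 - w.2) ^+ 2.
have D_gt0 : 0 < D.
  rewrite lt_neqAle addr_ge0 ?sqr_ge0 // andbT; apply/eqP => D0.
  have CS : c ^+ 2 <= ((X.1 - w.1) ^+ 2 + (X.2 - w.2) ^+ 2) * D.
    have := sqr_ge0 ((X.1 - w.1) * (z.2 - w.2) - (X.2 - w.2) * (z.1 - w.1)).
    by rewrite /c /D /dot_from; nra.
  by move: CS; rewrite -D0 mulr0; nra.
have sqd2_seg (t : R) : sqd2 X ((1 - t) * w.1 + t * z.1, (1 - t) * w.2 + t * z.2)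
    = sqd2 X w - 2 * t * c + t ^+ 2 * D.
  by rewrite /sqd2 /c /D /dot_from /=; ring.
(* Moving from w towards z by t = min (c / D) 1 gets strictly closer to X. *)
have [cD|Dc] := lerP c D.
  have t01 : 0 <= c / D <= 1.
    by rewrite divr_ge0 ?(ltW c0) ?(ltW D_gt0) // ler_pdivrMr // mul1r.
  have := wmin _ (cvxS _ _ _ t01 Sw Sz); rewrite sqd2_seg.
  have -> : (c / D) ^+ 2 * D = c / D * c by rewrite expr2 -mulrA divfK ?gt_eqF.
  by have := divr_gt0 c0 D_gt0; nra.
have := wmin _ Sz; have -> : sqd2 X z = sqd2 X w - 2 * c + D.
  by rewrite /sqd2 /c /D /dot_from; ring.
lra.
Qed.

Lemma normal_sqd2_le X1 X2 w1 w2 :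
  dot_from w1 X1 w2 <= 0 -> dot_from w2 X2 w1 <= 0 -> sqd2 w1 w2 <= sqd2 X1 X2.
Proof.
rewrite /dot_from /sqd2 => h1 h2.
have := sqr_ge0 ((X1.1 - w1.1) - (X2.1 - w2.1)).
have := sqr_ge0 ((X1.2 - w1.2) - (X2.2 - w2.2)).
nra.
Qed.

Lemma voronoi_convex (a : R) (p : pt2 R) : convex2 (voronoi a p).
Proof.
move=> u v t /andP[t0 t1] Vu Vv l hl.
pose F q := sqd2 q p - sqd2 q l.
have Fu : F u <= 0 by rewrite subr_le0; exact: Vu.
have Fv : F v <= 0 by rewrite subr_le0; exact: Vv.
rewrite -subr_le0 -/(F _).
have -> : F ((1 - t) * u.1 + t * v.1, (1 - t) * u.2 + t * v.2) =
    (1 - t) * F u + t * F v by rewrite /F /sqd2 /=; ring.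
have : (1 - t) * F u <= 0 by rewrite mulr_ge0_le0 // subr_ge0.
have : t * F v <= 0 by rewrite mulr_ge0_le0.
lra.
Qed.

End nearest_point.

Lemma cos_sqr_le {R : realType} (x y : R) :
  0 <= x <= y -> y <= pi / 2 -> cos y ^+ 2 <= cos x ^+ 2.
Proof.
move=> /andP[x0 xy] ypi.
have pihalf_le_pi : pi / 2 <= pi :> R by rewrite ler_pdivrMr // ler_peMr ?pi_ge0 ?ler1n.
have cy0 : 0 <= cos y.
  apply: cos_ge0_pihalf; rewrite ypi andbT (le_trans _ (le_trans x0 xy)) //.
  by rewrite oppr_le0 divr_ge0 ?pi_ge0.
have x_itv : x \in `[0, pi] by rewrite in_itv /= x0 (le_trans xy (le_trans ypi _)).
have y_itv : y \in `[0, pi] by rewrite in_itv /= (le_trans x0 xy) (le_trans ypi _).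
have cyx : cos y <= cos x.
  have [-> //|xy'] := eqVneq x y.
  by rewrite ltW // ltr_cos // lt_neqAle xy' xy.
by rewrite ler_sqr ?nnegrE // (le_trans cy0).
Qed.

Section hexagonal_cell.
Context {R : realType}.
Variables (a : R) (p : pt2 R).
Hypotheses (a_gt0 : 0 < a) (hp : hexlat a p).
Implicit Types (u v w z X l : pt2 R) (x y : R).

Definition lat_y u : R := (u.2 - p.2) / (a * Num.sqrt 3).
Definition lat_x u : R := (u.1 - p.1 - lat_y u * a) / (2 * a).
Definition lat_pt x y : pt2 R :=
  (p.1 + x * (2 * a) + y * a, p.2 + y * (a * Num.sqrt 3)).

Let sqrt3_gt0 : 0 < Num.sqrt 3 :> R. Proof. by rewrite sqrtr_gt0 ltr0n. Qed.
Let sqrt3_sq : Num.sqrt 3 ^+ 2 = 3 :> R. Proof. by rewrite sqr_sqrtr // ler0n. Qed.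

Lemma lat_ptK u : lat_pt (lat_x u) (lat_y u) = u.
Proof.
case: u => u1 u2; rewrite /lat_pt /lat_x /lat_y /=.
by congr pair; field; rewrite ?mulf_neq0 ?gt_eqF.
Qed.

Lemma lat_x_pt x y : lat_x (lat_pt x y) = x.
Proof. by rewrite /lat_x /lat_y /lat_pt /=; field; rewrite ?mulf_neq0 ?gt_eqF. Qed.

Lemma lat_y_pt x y : lat_y (lat_pt x y) = y.
Proof. by rewrite /lat_y /lat_pt /=; field; rewrite ?mulf_neq0 ?gt_eqF. Qed.

Lemma lat_x_p : lat_x p = 0.
Proof. by rewrite /lat_x /lat_y !subrr !mul0r subrr mul0r. Qed.

Lemma lat_y_p : lat_y p = 0.
Proof. by rewrite /lat_y subrr mul0r. Qed.

(* Both sides agree as polynomials up to a multiple of sqrt 3 ^+ 2 - 3. *)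
Lemma sqd2_lat_pt x1 y1 x2 y2 :
  sqd2 (lat_pt x1 y1) (lat_pt x2 y2) = 4 * a ^+ 2 * eisQ (x1 - x2) (y1 - y2).
Proof.
apply/eqP; rewrite -subr_eq0 /sqd2 /lat_pt /eisQ /=.
rewrite (_ : _ - _ = (Num.sqrt 3 ^+ 2 - 3) * (a * (y1 - y2)) ^+ 2); last by ring.
by rewrite sqrt3_sq subrr mul0r.
Qed.

Lemma sqd2_lat u v :
  sqd2 u v = 4 * a ^+ 2 * eisQ (lat_x u - lat_x v) (lat_y u - lat_y v).
Proof. by rewrite -sqd2_lat_pt !lat_ptK. Qed.

Lemma dot_from_lat_pt x1 y1 x2 y2 x3 y3 :
  dot_from (lat_pt x1 y1) (lat_pt x2 y2) (lat_pt x3 y3) =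
  2 * a ^+ 2 * eisB (x2 - x1) (y2 - y1) (x3 - x1) (y3 - y1).
Proof.
apply/eqP; rewrite -subr_eq0 /dot_from /lat_pt /eisB /=.
rewrite (_ : _ - _ = (Num.sqrt 3 ^+ 2 - 3) * (a * (y2 - y1)) * (a * (y3 - y1)));
  last by ring.
by rewrite sqrt3_sq subrr !mul0r.
Qed.

Lemma dot_from_lat w X z :
  dot_from w X z = 2 * a ^+ 2 * eisB (lat_x X - lat_x w) (lat_y X - lat_y w)
                                     (lat_x z - lat_x w) (lat_y z - lat_y w).
Proof. by rewrite -dot_from_lat_pt !lat_ptK. Qed.

Lemma hexlat_lat_pt (m n : int) : hexlat a (lat_pt m%:~R n%:~R).
Proof.
case: hp => m0 [n0 pE]; exists (m0 + m), (n0 + n).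
by rewrite /lat_pt pE /= !intrD; congr pair; ring.
Qed.

Lemma lat_coord_hexlat l : hexlat a l ->
  exists m n : int, lat_x l = m%:~R /\ lat_y l = n%:~R.
Proof.
case: hp => m0 [n0 pE] [m [n ->]]; exists (m - m0), (n - n0).
by rewrite /lat_x /lat_y pE /= !intrB; split; field; rewrite ?mulf_neq0 ?gt_eqF.
Qed.

Lemma voronoiE w : voronoi a p w <-> eis_voronoi (lat_x w) (lat_y w).
Proof.
have a4 : 0 < 4 * a ^+ 2 by rewrite mulr_gt0 // exprn_gt0.
split=> [Vw m n|Vw l /lat_coord_hexlat[m [n [lx ly]]]].
- have := Vw _ (hexlat_lat_pt m n).
  by rewrite !sqd2_lat lat_x_p lat_y_p lat_x_pt lat_y_pt !subr0 ler_pM2l.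
- by rewrite !sqd2_lat lx ly lat_x_p lat_y_p !subr0 ler_pM2l.
Qed.

Lemma voronoi_sqd2_le w : voronoi a p w -> sqd2 w p <= 4 * a ^+ 2 / 3.
Proof.
move=> /voronoiE /eis_voronoi_eisQ_le Qle.
rewrite sqd2_lat lat_x_p lat_y_p !subr0 (le_trans (ler_wpM2l _ Qle)) ?mul1r //.
by rewrite mulr_ge0 ?sqr_ge0.
Qed.

Lemma normal_near_hexlat X w : voronoi a p w ->
  (forall z, voronoi a p z -> dot_from w X z <= 0) ->
  exists l, hexlat a l /\ sqd2 X l <= sqd2 w p.
Proof.
move=> /voronoiE Vw normal.
have a2 : 0 < 2 * a ^+ 2 by rewrite mulr_gt0 // exprn_gt0.
have a4 : 0 < 4 * a ^+ 2 by rewrite mulr_gt0 // exprn_gt0.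
have [|m [n mn]] := eis_voronoi_normal_near_lattice _ _ (lat_x X) (lat_y X) Vw.
  move=> z1 z2 Vz; have /normal : voronoi a p (lat_pt z1 z2).
    by apply/voronoiE; rewrite lat_x_pt lat_y_pt.
  by rewrite dot_from_lat lat_x_pt lat_y_pt pmulr_rle0.
exists (lat_pt m%:~R n%:~R); split; first exact: hexlat_lat_pt.
by rewrite !sqd2_lat lat_x_pt lat_y_pt lat_x_p lat_y_p !subr0 ler_pM2l.
Qed.

Let dist_lat_lbound X :
  has_lbound [set d | exists l, hexlat a l /\ d = Num.sqrt (sqd2 X l)].
Proof. by exists 0 => _ [l [_ ->]]; exact: sqrtr_ge0. Qed.

Lemma dist_lat_le X l : hexlat a l -> dist_lat a X <= Num.sqrt (sqd2 X l).
Proof. by move=> hl; apply: (ge_inf (dist_lat_lbound X)); exists l. Qed.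

Lemma dist_lat_ge0 X : 0 <= dist_lat a X.
Proof.
apply: lb_le_inf; first by exists (Num.sqrt (sqd2 X p)), p.
by move=> _ [l [_ ->]]; exact: sqrtr_ge0.
Qed.

Lemma dist_lat_voronoi w : voronoi a p w -> dist_lat a w = Num.sqrt (sqd2 w p).
Proof.
move=> Vw; apply/le_anti; rewrite dist_lat_le //=.
apply: lb_le_inf; first by exists (Num.sqrt (sqd2 w p)), p.
by move=> _ [l [hl ->]]; rewrite ler_sqrt ?Vw // addr_ge0 ?sqr_ge0.
Qed.

Lemma dist_lat_voronoi_le w : voronoi a p w -> dist_lat a w <= 2 * a / Num.sqrt 3.
Proof.
move=> Vw.
rewrite dist_lat_voronoi // -(ger0_norm (_ : 0 <= 2 * a / Num.sqrt 3)); last first.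
  by rewrite divr_ge0 ?mulr_ge0 ?ltW.
rewrite -sqrtr_sqr ler_sqrt ?sqr_ge0 // expr_div_n sqr_sqrtr ?ler0n // exprMn.
by rewrite (le_trans (voronoi_sqd2_le w Vw)) //; lra.
Qed.

Lemma dist_lat_normal_le X w : voronoi a p w ->
  (forall z, voronoi a p z -> dot_from w X z <= 0) -> dist_lat a X <= dist_lat a w.
Proof.
move=> Vw normal; have [l [hl Xl]] := normal_near_hexlat X w Vw normal.
rewrite (dist_lat_voronoi w Vw) (le_trans (dist_lat_le X l hl)) // ler_sqrt //.
by rewrite addr_ge0 ?sqr_ge0.
Qed.

End hexagonal_cell.

Lemma exists_subdivision_itv {R : realType} (n : nat) (s : nat -> R) (t : R) :
  s 0%N <= t -> t <= s n -> ~ range s t -> exists2 i, (i < n)%N & s i < t < s i.+1.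
Proof.
move=> s0t tsn t_range.
have s_neq k : s k != t by apply/eqP => skt; apply: t_range; exists k.
suff [snt|//] : s n < t \/ exists2 i, (i < n)%N & s i < t < s i.+1.
  by move: tsn; rewrite leNgt snt.
elim: n {tsn} => [|k [skt|[i ik hi]]]; first by left; rewrite lt_neqAle s_neq s0t.
- have [tsk|skt'] := ltP t (s k.+1); first by right; exists k; rewrite ?skt.
  by left; rewrite lt_neqAle s_neq skt'.
- by right; exists i => //; exact: ltnW.
Qed.

Lemma piecewise_smooth_cderivable {R : realType} (c : R -> pt3 R) (t0 t1 : R) :
  piecewise_smooth c t0 t1 ->
  exists s : nat -> R, forall t, t0 <= t <= t1 -> ~ range s t -> cderivable c t.
Proof.
move=> [n [s [<- <- _ smooth]]]; exists s => t /andP[s0t tsn] t_range.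
have [i ilt /andP[sit tsi]] := exists_subdivision_itv n s t s0t tsn t_range.
have [g [[dg _] cg]] := smooth i ilt.
have c_near_g : {near t, g =1 c}.
  near=> u; apply/esym/cg; apply/andP; split; apply: ltW.
  - by near: u; exact: lt_nbhsr.
  - by near: u; exact: lt_nbhsl.
have near_comp (f : pt3 R -> R) : {near t, f \o g =1 f \o c}.
  by near=> u; rewrite /= (near c_near_g u).
have [dg1 dg2 dg3] := dg t.
by split; [exact: near_eq_derivable (near_comp _) dg1
          |exact: near_eq_derivable (near_comp _) dg2
          |exact: near_eq_derivable (near_comp _) dg3].
Unshelve. all: by end_near. Qed.

Lemma hspeed_ge0 {R : realType} (a : R) (c : R -> pt3 R) t : 0 <= hspeed a c t.
Proof. by rewrite /hspeed; case: ifP => _ //; exact: sqrtr_ge0. Qed.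

Section prism_projection.
Context {R : realType}.
Variables (a : R) (p : pt2 R) (P : pt3 R -> pt3 R).
Hypotheses (a_gt0 : 0 < a) (hp : hexlat a p) (NP : nearest_proj (prism a p) P).
Implicit Types (x y : pt3 R).

Lemma nearest_proj_prism x :
  [/\ pz (P x) = pz x, voronoi a p (hor (P x)) &
      forall u, voronoi a p u -> sqd2 (hor x) (hor (P x)) <= sqd2 (hor x) u].
Proof.
have [DP Pmin] := NP x.
have key u : voronoi a p u ->
    sqd2 (hor x) (hor (P x)) + (pz x - pz (P x)) ^+ 2 <= sqd2 (hor x) u.
  move=> Vu; have := Pmin (u, pz x) Vu.
  by rewrite /sqd3 /sqd2 /px /py /pz /hor /= subrr expr0n /= addr0.
have Pz : pz (P x) = pz x.
  have := key _ DP; rewrite -[leRHS]addr0 lerD2l => z_le0.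
  have /eqP : (pz x - pz (P x)) ^+ 2 = 0 by apply/le_anti; rewrite z_le0 sqr_ge0.
  by rewrite sqrf_eq0 subr_eq0 => /eqP.
by split=> // u /key; rewrite Pz subrr expr0n /= addr0.
Qed.

Lemma proj_normal x z : voronoi a p z -> dot_from (hor (P x)) (hor x) z <= 0.
Proof.
have [_ VP Pmin] := nearest_proj_prism x.
exact: (nearest_normal _ _ _ (voronoi_convex a p) VP Pmin z).
Qed.

Lemma sqd2_hor_proj_le x y : sqd2 (hor (P x)) (hor (P y)) <= sqd2 (hor x) (hor y).
Proof.
have [_ VPx _] := nearest_proj_prism x; have [_ VPy _] := nearest_proj_prism y.
by apply: normal_sqd2_le; [exact: proj_normal x _ VPy | exact: proj_normal y _ VPx].
Qed.

Hypothesis api : 2 * a / Num.sqrt 3 < pi / 2.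

Lemma cos_dist_lat_proj x :
  cos (dist_lat a (hor (P x))) ^+ 2 <= cos (dist_lat a (hor x)) ^+ 2.
Proof.
have [_ VP _] := nearest_proj_prism x.
apply: cos_sqr_le.
  rewrite (dist_lat_ge0 a p hp) (dist_lat_normal_le a p a_gt0 hp _ _ VP) //.
  exact: proj_normal.
exact/ltW/(le_lt_trans (dist_lat_voronoi_le a p a_gt0 hp _ VP)).
Qed.

Lemma hspeed_proj_le (g : R -> pt3 R) t :
  cderivable g t -> hspeed a (P \o g) t <= hspeed a g t.
Proof.
move=> dg; rewrite /hspeed (asboolT dg).
case: asboolP => [[dP1 dP2 dP3]|_]; last exact: sqrtr_ge0.
have [dg1 dg2 dg3] := dg.
rewrite ler_sqrt; last by rewrite /hmetric !addr_ge0 ?sqr_ge0 // mulr_ge0 ?sqr_ge0.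
have Pz : @pz R \o (P \o g) = @pz R \o g.
  by apply/funext => u /=; case: (nearest_proj_prism (g u)).
have hor_le :=
  derive_sqnorm_le dP1 dP2 dg1 dg2 (fun u => sqd2_hor_proj_le (g u) (g t)).
have := cos_dist_lat_proj (g t).
rewrite /hmetric /cderive /px /py /pz /= -/(@pz R \o (P \o g)) Pz /=.
by have := sqr_ge0 ('D_1 (@pz R \o g) t); nra.
Qed.

End prism_projection.

Theorem mainTheorem4 (R : realType) (a : R) (p : pt2 R)
  (P : pt3 R -> pt3 R) (gamma : R -> pt3 R) (t0 t1 : R) :
  0 < a ->
  2 * a / Num.sqrt 3 < pi / 2 ->
  hexlat a p ->
  nearest_proj (prism a p) P ->
  t0 <= t1 ->
  piecewise_smooth gamma t0 t1 ->
  (hlength a (P \o gamma) t0 t1 <= hlength a gamma t0 t1)%E.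
Proof.
move=> a_gt0 api hp NP _ /piecewise_smooth_cderivable[s smooth_off_s].
have countable_s : countable (range s).
  exact: sub_countable (card_image_le _ _) (countableP _).
apply: (ge0_le_integral_offnull (@lebesgue_measure R) _ (range s)).
- by apply: countable_measurable.
- exact: countable_lebesgue_measure0.
- by move=> t _; exact: hspeed_ge0.
- by move=> t _; exact: hspeed_ge0.
move=> t; rewrite /= in_itv => t01 t_range.
exact: hspeed_proj_le a_gt0 hp NP api _ _ (smooth_off_s t t01 t_range).
Qed.
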